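(* Let $\mathbf{x}=x_1x_2\ldots$ be an infinite word over a finite alphabet. The following statements are equivalent: (i) $\mathbf{x}$ is eventually periodic; (ii) $r(n,\mathbf{x})\le 2n$ for all sufficiently large integers $n$; (iii) there exists $M$ such that $r(n,\mathbf{x})-n\le M$ for all $n\ge 1$.
   Context: For integers $i\le j$, $x_i^j$ denotes the factor $x_ix_{i+1}\cdots x_j$ of $\mathbf{x}$. For $n\ge1$, $r(n,\mathbf{x})=\min\{m\ge1:\ x_i^{i+n-1}=x_{m-n+1}^{m}\text{ for some } i \text{ with } 1\le i\le m-n\}$, i.e. the length of the shortest prefix of $\mathbf{x}$ containing two (possibly overlapping) occurrences of some word of length $n$. *)

From mathcomp Require Import all_boot.
From Stdlib Require Import ClassicalEpsilon.
Set Implicit Arguments. Unset Strict Implicit. Unset Printing Implicit Defensive.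

(* An infinite word x = x_1 x_2 ... over a finite alphabet A is represented by
   x : nat -> A with the 0-based shift  x_i = x (i - 1)  (i >= 1). *)

(* rep n x m : the prefix x_1 .. x_m contains x_i^{i+n-1} = x_{m-n+1}^m
   for some i with 1 <= i <= m - n. In 0-based indices: x_{i+k} = x (i-1+k),
   x_{m-n+1+k} = x (m-n+k), for k < n. *)
Definition rep (A : finType) (n : nat) (x : nat -> A) (m : nat) : bool :=
  [exists i : 'I_m.+1,
     [&& 1 <= i, i <= m - n &
        [forall k : 'I_n, x (i.-1 + k) == x (m - n + k)]]].

(* r(n, x) = min { m >= 1 : rep n x m }.  (For a finite alphabet such m always
   exists by pigeonhole; the default value 0 is never used then.) *)
Definition r (A : finType) (n : nat) (x : nat -> A) : nat :=
  match excluded_middle_informative (exists m, rep n x m) with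
  | left H => ex_minn H
  | right _ => 0
  end.

Definition eventually_periodic (A : Type) (x : nat -> A) : Prop :=
  exists p N, 0 < p /\ forall i, N <= i -> x (i + p) = x i.

From mathcomp Require Import all_boot zify.
From Stdlib Require Import ClassicalEpsilon Classical.
Set Implicit Arguments. Unset Strict Implicit.

(* For (ii) => (i), the key point is
   that when r(n) <= 2n and r(n+1) <= 2n+2 the two minimal repetitions overlap
   enough for the Fine-Wilf theorem to apply, which forces r(n+1) <= r(n) + 1.
   Hence the offset r(n) - n of the second occurrence of the length-n suffix is
   eventually bounded, so finitely many pairs of starting positions a < b
   serve all n; one of them serves infinitely many n, i.e. x_a x_(a+1) ... and
   x_b x_(b+1) ... coincide, and x is eventually periodic. *)

Section Periods.

Variable T : Type.
Implicit Type y : nat -> T.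

Definition has_period y (L p : nat) : Prop :=
  forall i, i + p < L -> y i = y (i + p).

Lemma has_period_le y L L' p : L' <= L -> has_period y L p -> has_period y L' p.
Proof. by move=> le_L per_p i lt_i; apply: per_p; lia. Qed.

Lemma has_period_mul y L p k i :
  has_period y L p -> i + k * p < L -> y i = y (i + k * p).
Proof.
move=> per_p; elim: k i => [|k IHk] i lt_i; first by rewrite mul0n addn0.
rewrite mulSn in lt_i *; rewrite per_p; last lia.
by rewrite IHk ?addnA //; lia.
Qed.

Lemma has_period_congr y L p i j u v :
  has_period y L p -> i < L -> j < L -> i + u * p = j + v * p -> y i = y j.
Proof.
move=> per_p; wlog le_vu : i j u v / v <= u => [WLOG|lt_i lt_j eq_ij].
  move=> lt_i lt_j eq_ij; case: (leqP v u) => [le_vu|/ltnW le_uv].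
    exact: WLOG eq_ij.
  by symmetry; apply: WLOG (esym eq_ij).
have le_vpup : v * p <= u * p by rewrite leq_mul2r le_vu orbT.
have eq_j : j = i + (u - v) * p by rewrite mulnBl; lia.
by rewrite eq_j; apply: (has_period_mul per_p); rewrite -eq_j.
Qed.

Lemma has_period_shift y a b n s :
  a <= b -> a <= s -> (forall k, k < n -> y (a + k) = y (b + k)) ->
  has_period (fun i => y (s + i)) (b + n - s) (b - a).
Proof.
move=> le_ab le_as occ i lt_i; have := occ (s + i - a) ltac:(lia).
have -> : a + (s + i - a) = s + i by lia.
by have -> : b + (s + i - a) = s + (i + (b - a)) by lia.
Qed.

Theorem fine_wilf y L p q :
  0 < p -> 0 < q -> p + q <= L + gcdn p q ->
  has_period y L p -> has_period y L q -> has_period y L (gcdn p q).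
Proof.
move: {2}(p + q) (leqnn (p + q)) => n; elim: n p q L => [|n IHn] p q L; first lia.
wlog lt_qp : p q / q < p => [WLOG|].
  case: (ltngtP p q) => [lt_pq|lt_qp|->] *; last by rewrite gcdnn.
  - by rewrite gcdnC; apply: WLOG; rewrite 1?gcdnC // addnC.
  - exact: WLOG.
move=> le_pq_n p_gt0 q_gt0 le_pq_L per_p per_q.
set g := gcdn p q.
have gE : g = gcdn (p - q) q.
  by rewrite /g gcdnC -{1}(subnK (ltnW lt_qp)) gcdnDr gcdnC.
have g_dvd_q : g %| q by apply: dvdn_gcdr.
have le_g_q : g <= q by apply: dvdn_leq.
have le_g_pq : g <= p - q by rewrite gE; apply: dvdn_leq; [lia | apply: dvdn_gcdl].
have per_pre : has_period y (L - q) g.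
  rewrite gE; apply: IHn; rewrite -?gE; try lia.
    move=> i lt_i; rewrite per_p; last lia.
    by rewrite (per_q (i + (p - q))); [congr y|]; lia.
  by apply: has_period_le per_q; lia.
move=> i lt_i; case: (ltnP (i + g) (L - q)) => [|le_i]; first exact: per_pre.
case: (leqP q i) => [le_qi|lt_iq].
  have eq_i : y (i - q) = y i by rewrite (per_q (i - q)) subnK //; lia.
  have eq_ig : y (i - q + g) = y (i + g).
    by rewrite (per_q (i - q + g)); [congr y|]; lia.
  by rewrite -eq_i -eq_ig; apply: per_pre; lia.
rewrite (_ : i + g = (i + g - q) + q); last lia.
rewrite -per_q; last lia.
by apply: (has_period_congr (u := 1) (v := q %/ g) per_pre); rewrite ?divnK //; lia.
Qed.

Lemma downward_closed_witness (I : finType) (P : I -> nat -> Prop) :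
  (forall t m n, m <= n -> P t n -> P t m) -> (forall n, exists t, P t n) ->
  exists t, forall n, P t n.
Proof.
move=> down_closed ex_t; apply: NNPP => noP.
have failP t : exists n, ~ P t n.
  by apply: not_all_ex_not => Pt; apply: noP; exists t.
have fail_seq (s : seq I) : exists N, forall t, t \in s -> ~ P t N.
  elim: s => [|t s [N failN]]; first by exists 0.
  have [n failn] := failP t; exists (maxn n N) => t'.
  rewrite inE => /orP[/eqP-> | /failN fail_t'] Pt'.
    by apply: failn; apply: down_closed Pt'; lia.
  by apply: fail_t'; apply: down_closed Pt'; lia.
have [N failN] := fail_seq (enum I); have [t Pt] := ex_t N.
by apply: (failN t); rewrite ?mem_enum.
Qed.

End Periods.

Lemma eventually_periodic_of_shift (T : Type) (y : nat -> T) a b :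
  a < b -> (forall k, y (a + k) = y (b + k)) -> eventually_periodic y.
Proof.
move=> lt_ab eq_ab; exists (b - a), a; split=> [|i le_ai]; first lia.
by have := eq_ab (i - a); rewrite subnKC // => ->; congr y; lia.
Qed.

Section Repetitions.

Variables (A : finType) (x : nat -> A).

Lemma repP n m :
  reflect (exists2 a, a < m - n & forall k, k < n -> x (a + k) = x (m - n + k))
          (rep n x m).
Proof.
apply: (iffP existsP) => [[i /and3P[i_gt0 le_i /forallP occ]]|[a lt_a occ]].
  by exists i.-1; [lia | move=> k lt_k; apply/eqP; apply: (occ (Ordinal lt_k))].
have lt_a1 : a.+1 < m.+1 by lia.
exists (Ordinal lt_a1); apply/and3P; split=> //=.
by apply/forallP => k; apply/eqP; apply: occ.
Qed.

Lemma rep_exists n : exists m, rep n x m.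
Proof.
pose w (i : 'I_(#|A| ^ n).+1) := [ffun k : 'I_n => x (i + k)].
have /injectivePn[i [j neq_ij eq_w]] : ~~ injectiveb w.
  by apply/injectiveP => /leq_card; rewrite card_ffun !card_ord; lia.
wlog lt_ij : i j neq_ij eq_w / i < j => [WLOG|].
  case: (ltngtP i j) => [|lt_ji|/val_inj eq_ij]; first exact: WLOG.
    by apply: (WLOG j i); rewrite // eq_sym.
  by rewrite eq_ij eqxx in neq_ij.
exists (j + n); apply/repP; exists i; first lia.
move=> k lt_k; have := congr1 (fun f : {ffun 'I_n -> A} => f (Ordinal lt_k)) eq_w.
by rewrite !ffunE /= addnK.
Qed.

Lemma r_rep n : rep n x (r n x).
Proof.
rewrite /r; case: excluded_middle_informative => [ex_rep|no_rep].
  by case: ex_minnP.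
by case: no_rep; apply: rep_exists.
Qed.

Lemma r_min n m : rep n x m -> r n x <= m.
Proof.
rewrite /r; case: excluded_middle_informative => [ex_rep|no_rep] rep_m.
  by case: ex_minnP => m0 _; apply.
by case: no_rep; exists m.
Qed.

Lemma eventually_periodic_r_bounded :
  eventually_periodic x -> exists M, forall n, 1 <= n -> r n x <= n + M.
Proof.
move=> [p [N [p_gt0 per_x]]]; exists (N + p) => n _.
suff /r_min : rep n x (N + p + n) by lia.
apply/repP; exists N => [|k lt_k]; first lia.
have -> : N + p + n - n + k = N + k + p by lia.
by rewrite per_x // leq_addr.
Qed.

Lemma r_succ_le n : 0 < n -> r n x <= 2 * n -> r n.+1 x <= 2 * n.+1 ->
  r n.+1 x <= (r n x).+1.
Proof.
move=> n_gt0; have /repP[a lt_a occ] := r_rep n.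
have /repP[a' lt_a' occ'] := r_rep n.+1.
move: lt_a occ lt_a' occ'; set m := r n x; set m' := r n.+1 x.
move=> lt_a occ lt_a' occ' le_m le_m'; case: (leqP m' m.+1) => // lt_m.
suff /r_min : rep n.+1 x m.+1 by rewrite -/m'; lia.
apply/repP; exists a => [|k lt_k]; first lia.
case: (ltnP k n) => [lt_kn|le_nk]; first by rewrite occ //; congr x; lia.
have -> : k = n by lia.
(* Only x_(a+n) = x_m is new.  The windows of the two minimal repetitions
   overlap on x_s .. x_(m-1), which has periods p and q and is long enough for
   Fine-Wilf; x_m = x_(m-q) comes from the second repetition. *)
set p := m - n - a; set q := m' - n.+1 - a'; set s := maxn a a'.
have per_p : has_period (fun i => x (s + i)) (m - s) p.
  rewrite -[m in m - s](subnK (_ : n <= m)); last lia.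
  by apply: has_period_shift _ _ occ; lia.
have per_q : has_period (fun i => x (s + i)) (m - s) q.
  apply: has_period_le (has_period_shift _ _ occ'); lia.
have g_gt0 : 0 < gcdn p q by rewrite gcdn_gt0; apply/orP; left; lia.
have per_g : has_period (fun i => x (s + i)) (m - s) (gcdn p q).
  by apply: fine_wilf per_p per_q; lia.
have x_m : x m = x (m - q).
  have := occ' (m - (m' - n.+1)) ltac:(lia).
  have -> : a' + (m - (m' - n.+1)) = m - q by lia.
  by have -> : m' - n.+1 + (m - (m' - n.+1)) = m by lia.
have x_mq : x (m - q) = x (m - p).
  have := has_period_congr (u := q %/ gcdn p q) (v := p %/ gcdn p q) per_g
    (i := m - q - s) (j := m - p - s).
  rewrite !divnK ?dvdn_gcdl ?dvdn_gcdr //=.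
  have -> : s + (m - q - s) = m - q by lia.
  have -> : s + (m - p - s) = m - p by lia.
  by apply; lia.
have -> : a + n = m - p by lia.
have -> : m.+1 - n.+1 + n = m by lia.
by rewrite x_m x_mq.
Qed.

Lemma r_sub_le N0 : 0 < N0 -> (forall n, N0 <= n -> r n x <= 2 * n) ->
  forall n, N0 <= n -> r n x - n <= r N0 x - N0.
Proof.
move=> N0_gt0 r_le n /subnKC <-; elim: (n - N0) => [|d IHd]; first by rewrite addn0.
have := r_succ_le (n := N0 + d) ltac:(lia) (r_le _ (leq_addr _ _)).
by rewrite -addnS => /(_ (r_le _ (leq_addr _ _))); lia.
Qed.

Lemma r_le_double_eventually_periodic :
  (exists N, forall n, N <= n -> r n x <= 2 * n) -> eventually_periodic x.
Proof.
move=> [N r_le].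
have r_le' k : N.+1 <= k -> r k x <= 2 * k by move/ltnW; apply: r_le.
pose P (ab : 'I_(r N.+1 x - N.+1).+1 * 'I_(r N.+1 x - N.+1).+1) n :=
  ab.1 < ab.2 /\ forall k, k < n -> x (ab.1 + k) = x (ab.2 + k).
have [[a b] /= Pab] : exists ab, forall n, P ab n.
  apply: downward_closed_witness => [ab m n le_mn [lt_ab occ]|n].
    by split=> // k lt_k; apply: occ; lia.
  have [n' le_nn' le_Nn'] : exists2 n', n <= n' & N.+1 <= n'.
    by exists (maxn n N.+1); lia.
  have /repP[a lt_a occ] := r_rep n'.
  have le_C := r_sub_le (ltn0Sn N) r_le' le_Nn'.
  have lt_aC : a < (r N.+1 x - N.+1).+1 by lia.
  have lt_bC : r n' x - n' < (r N.+1 x - N.+1).+1 by lia.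
  exists (Ordinal lt_aC, Ordinal lt_bC); split=> //= k lt_k; apply: occ; lia.
have [lt_ab _] := Pab 0.
by apply: (eventually_periodic_of_shift lt_ab) => k; apply: (Pab k.+1).2.
Qed.

End Repetitions.

Theorem theorem2p3 (A : finType) (x : nat -> A) :
  (eventually_periodic x <-> exists N, forall n, N <= n -> r n x <= 2 * n) /\
  ((exists N, forall n, N <= n -> r n x <= 2 * n) <->
   exists M, forall n, 1 <= n -> r n x <= n + M).
Proof.
have iii_ii : (exists M, forall n, 1 <= n -> r n x <= n + M) ->
    exists N, forall n, N <= n -> r n x <= 2 * n.
  by move=> [M r_le]; exists M.+1 => n le_Mn; have := r_le n; lia.
split; split.
- by move/eventually_periodic_r_bounded/iii_ii.
- exact: r_le_double_eventually_periodic.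
- by move/r_le_double_eventually_periodic/eventually_periodic_r_bounded.
- exact: iii_ii.
Qed.
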